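(* Let $\alpha\in\mathcal{L}^*(E_{\mathbb{Z}})$ with $|\alpha|\ge2$. Then there exists $n\ge0$ such that $$\alpha=\gamma_0\, i_1^{(n)}\cdots i_k^{(n)}\,\gamma_1,\qquad 2\le k\le 4,\ i_1,\dots,i_k\in\{0,1\},$$ where $\gamma_0$ is a final subpath (suffix) of $0^{(n)}$ or of $1^{(n)}$ and $\gamma_1$ is an initial subpath (prefix) of $0^{(n)}$ or of $1^{(n)}$, with $0\le|\gamma_0|,|\gamma_1|<2^n$ ($n$ need not be unique). Moreover, for a fixed such $n$, this expression of $\alpha$ in $i^{(n)}$-blocks is unique.
   Context: The two-sided Thue--Morse sequence $\omega=(\omega_k)_{k\in\mathbb{Z}}$ over $\{0,1\}$ is defined by $\omega_0=0$, $\omega_{2^n+j}=1-\omega_j$ for $n\ge0$, $0\le j<2^n$, and $\omega_{-i}=\omega_{i-1}$ for $i\ge1$. $\mathcal{L}^*(E_{\mathbb{Z}})$ denotes the set of finite nonempty words occurring in $\omega$. Blocks $i^{(n)}$: $0^{(0)}=0$, $1^{(0)}=1$, and inductively $0^{(n)}=0^{(n-1)}1^{(n-1)}$, $1^{(n)}=1^{(n-1)}0^{(n-1)}$ (concatenation); $|i^{(n)}|=2^n$. Empty $\gamma_0,\gamma_1$ are allowed. *)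

From mathcomp Require Import all_boot all_order all_algebra.
Set Implicit Arguments. Unset Strict Implicit. Unset Printing Implicit Defensive.
Import GRing.Theory Num.Theory.

(* Letters 0,1 are encoded as false,true. *)

(* One-sided Thue--Morse on nat, following the recursion
   w_0 = 0, w_(2^n + j) = 1 - w_j (0 <= j < 2^n):
   for m >= 1, n = trunc_log 2 m and j = m - 2^n < 2^n.
   The fuel argument only ensures termination (fuel m.+1 suffices). *)
Fixpoint tm_fuel (fuel m : nat) : bool :=
  match fuel with
  | 0 => false
  | f.+1 => if m is 0 then false
            else ~~ tm_fuel f (m - 2 ^ trunc_log 2 m)
  end.

Definition tm (m : nat) : bool := tm_fuel m.+1 m.

(* Two-sided sequence: omega_(-i) = omega_(i-1) for i >= 1;
   Negz n = -(n+1), so omega (Negz n) = omega_n. *)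
Definition omega (k : int) : bool :=
  match k with
  | Posz n => tm n
  | Negz n => tm n
  end.

(* alpha is in L^*(E_Z): a finite nonempty factor of omega. *)
Definition occurs (alpha : seq bool) : Prop :=
  0 < size alpha /\
  exists m : int, alpha = mkseq (fun i => omega (m + (i%:Z))%R) (size alpha).

Fixpoint block (n : nat) (i : bool) : seq bool :=
  match n with
  | 0 => [:: i]
  | n'.+1 => block n' i ++ block n' (~~ i)
  end.

Definition block_decomp (n : nat) (alpha g0 : seq bool) (ks : seq bool)
    (g1 : seq bool) : Prop :=
  [/\ alpha = g0 ++ flatten [seq block n i | i <- ks] ++ g1,
      2 <= size ks <= 4,
      (exists i : bool, suffix g0 (block n i)),
      (exists i : bool, prefix g1 (block n i)) &
      (size g0 < 2 ^ n) && (size g1 < 2 ^ n)].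

From mathcomp Require Import all_boot all_order all_algebra.
From mathcomp Require Import zify ring.
Set Implicit Arguments. Unset Strict Implicit. Unset Printing Implicit Defensive.
Import GRing.Theory Num.Theory.

(* At every scale n, omega is a concatenation of the blocks 0^(n) and 1^(n)
   placed at the multiples of 2^n: positions [2^n q, 2^n (q+1)) carry the
   block of the letter omega(2^n q).  Conversely, two consecutive n-blocks can
   only start at a multiple of 2^n: by induction they are aligned at scale
   n-1, and an odd offset at that scale would force three equal consecutive
   letters omega(2^n v), impossible since the letters at 2v and 2v+1 always
   differ.  So in any decomposition gamma_0 is the gap from the start of alpha
   to the next multiple of 2^n, which gives uniqueness; for existence take the
   largest n for which two whole blocks fit after that gap. *)

Lemma sub_pow2_trunc_log_lt m : 0 < m -> m - 2 ^ trunc_log 2 m < m.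
Proof.
move=> m_gt0; have := trunc_logP (isT : 1 < 2) m_gt0.
have : 0 < 2 ^ trunc_log 2 m by rewrite expn_gt0.
lia.
Qed.

Lemma eq_tm_fuel f g m : m < f -> m < g -> tm_fuel f m = tm_fuel g m.
Proof.
elim: f g m => [|f IH] [|g] [|m] //= ltf ltg.
by congr negb; apply: IH; have := sub_pow2_trunc_log_lt (ltn0Sn m); lia.
Qed.

Lemma tm_unfold m : 0 < m -> tm m = ~~ tm (m - 2 ^ trunc_log 2 m).
Proof.
case: m => [|m] // _.
transitivity (~~ tm_fuel m.+1 (m.+1 - 2 ^ trunc_log 2 m.+1)); first by [].
by congr negb; apply: eq_tm_fuel; have := sub_pow2_trunc_log_lt (ltn0Sn m); lia.
Qed.

Lemma tm_pow2D n j : j < 2 ^ n -> tm (2 ^ n + j) = ~~ tm j.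
Proof.
move=> lt_j; have pow_gt0 : 0 < 2 ^ n by rewrite expn_gt0.
rewrite tm_unfold; last lia.
have -> : trunc_log 2 (2 ^ n + j) = n by apply: trunc_log_eq => //; rewrite expnS; lia.
by rewrite addKn.
Qed.

Lemma tm_pow2 n : tm (2 ^ n) = true.
Proof. by rewrite -[2 ^ n]addn0 tm_pow2D ?expn_gt0. Qed.

Lemma tm_pow2MD n q j : j < 2 ^ n -> tm (2 ^ n * q + j) = tm q (+) tm j.
Proof.
move=> lt_j; elim/ltn_ind: q => [[|q]] IH; first by rewrite muln0.
set t := trunc_log 2 q.+1.
have ge_t : 2 ^ t <= q.+1 by exact: trunc_logP.
have lt_t : q.+1 < 2 ^ t * 2 by rewrite -expnSr; exact: trunc_log_ltn.
have -> : q.+1 = 2 ^ t + (q.+1 - 2 ^ t) by lia.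
rewrite tm_pow2D; last lia.
have -> : 2 ^ n * (2 ^ t + (q.+1 - 2 ^ t)) + j
          = 2 ^ (n + t) + (2 ^ n * (q.+1 - 2 ^ t) + j) by rewrite expnD; lia.
rewrite tm_pow2D ?IH ?addNb //; first lia.
rewrite expnD; apply: (@leq_trans (2 ^ n * (q.+1 - 2 ^ t).+1)).
  by rewrite mulnS addnC ltn_add2r.
by rewrite leq_mul2l; apply/orP; right; lia.
Qed.

Lemma tm_pow2_rev n j : j < 2 ^ n -> tm (2 ^ n - 1 - j) = tm (2 ^ n - 1) (+) tm j.
Proof.
elim: n j => [|n IH] j lt_j; first by case: j lt_j.
have pow_gt0 : 0 < 2 ^ n by rewrite expn_gt0.
rewrite expnS in lt_j *.
have -> : 2 * 2 ^ n - 1 = 2 ^ n + (2 ^ n - 1) by lia.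
rewrite tm_pow2D; last lia.
case: (ltnP j (2 ^ n)) => [lt_jn | le_nj].
  have -> : 2 ^ n + (2 ^ n - 1) - j = 2 ^ n + (2 ^ n - 1 - j) by lia.
  by rewrite tm_pow2D ?IH ?addNb //; lia.
have -> : 2 ^ n + (2 ^ n - 1) - j = 2 ^ n - 1 - (j - 2 ^ n) by lia.
have -> : j = 2 ^ n + (j - 2 ^ n) by lia.
rewrite addKn tm_pow2D ?IH ?addbN ?addNb ?negbK //; lia.
Qed.

Lemma mkseqD (T : Type) (f : nat -> T) a b :
  mkseq f (a + b) = mkseq f a ++ mkseq (fun i => f (a + i)) b.
Proof.
by rewrite /mkseq iotaD map_cat add0n -[X in iota X b]addn0 iotaDl -map_comp.
Qed.

Lemma eq_in_mkseq (T : Type) (f g : nat -> T) n :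
  (forall i, i < n -> f i = g i) -> mkseq f n = mkseq g n.
Proof. by move=> eq_fg; apply/eq_in_map => i; rewrite mem_iota add0n; apply: eq_fg. Qed.

Lemma block_mkseq n b : block n b = mkseq (fun j => b (+) tm j) (2 ^ n).
Proof.
elim: n b => [|n IH] b /=; first by rewrite /mkseq /= addbF.
rewrite !IH expnS mul2n -addnn mkseqD; congr (_ ++ _).
by apply: eq_in_mkseq => j lt_j; rewrite tm_pow2D // addNb addbN.
Qed.

Lemma size_block n b : size (block n b) = 2 ^ n.
Proof. by rewrite block_mkseq size_mkseq. Qed.

Lemma block_inj n : injective (block n).
Proof.
move=> b b' /(congr1 (nth false ^~ 0)).
by rewrite !block_mkseq !nth_mkseq ?expn_gt0 // !addbF.
Qed.

Lemma size_flatten_blocks n ks :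
  size (flatten [seq block n b | b <- ks]) = size ks * 2 ^ n.
Proof. by elim: ks => [|b ks IH] //=; rewrite size_cat IH size_block mulSn. Qed.

Lemma flatten_blocks_inj n : injective (fun ks => flatten [seq block n b | b <- ks]).
Proof.
move=> ks ks' eq_flat; have /eqP := congr1 size eq_flat.
rewrite !size_flatten_blocks eqn_pmul2r ?expn_gt0 // => /eqP.
elim: ks ks' eq_flat => [|b ks IH] [|b' ks'] //= /eqP.
rewrite eqseq_cat ?size_block // => /andP[/eqP/block_inj -> /eqP eq_rest] [eq_size].
by rewrite (IH ks').
Qed.

Section Omega.
Local Open Scope ring_scope.

Definition letter n (v : int) : bool := omega ((2 ^ n)%:Z * v).

Definition factor_at (m : int) (L : nat) : seq bool :=
  mkseq (fun i => omega (m + i%:Z)) L.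

Lemma omega_pow2MD n q j :
  (j < 2 ^ n)%N -> omega ((2 ^ n)%:Z * q + j%:Z) = letter n q (+) tm j.
Proof.
move=> lt_j; have pow_gt0 : (0 < 2 ^ n)%N by rewrite expn_gt0.
rewrite /letter; case: q => [q|q].
  by rewrite -!PoszM -PoszD /= tm_pow2MD // -[(2 ^ n * q)%N]addn0 tm_pow2MD ?addbF.
(* [omega (Negz i) = tm i]: on the negative half the block is read backwards. *)
have -> : (2 ^ n)%:Z * Negz q + j%:Z = Negz (2 ^ n * q + (2 ^ n - 1 - j))%N.
  by rewrite !NegzE; lia.
have -> : (2 ^ n)%:Z * Negz q = Negz (2 ^ n * q + (2 ^ n - 1 - 0))%N.
  by rewrite !NegzE; lia.
by rewrite /= !tm_pow2MD ?subn0 ?tm_pow2_rev ?addbA //; lia.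
Qed.

Lemma letterS n w : letter n.+1 w = letter n (2 * w).
Proof. by rewrite /letter expnS PoszM; congr omega; ring. Qed.

Lemma letter_odd n w : letter n (2 * w + 1) = ~~ letter n (2 * w).
Proof.
rewrite -letterS /letter.
have -> : (2 ^ n)%:Z * (2 * w + 1) = (2 ^ n.+1)%:Z * w + (2 ^ n)%:Z.
  by rewrite expnS PoszM; ring.
by rewrite omega_pow2MD ?ltn_exp2l // tm_pow2 addbT.
Qed.

Lemma int_parity (p : int) : exists w, p = 2 * w \/ p = 2 * w + 1.
Proof.
exists (p %/ 2)%Z; have := divz_eq p 2.
have := modz_ge0 p (isT : (2 : int) != 0).
have := ltz_pmod p (isT : (0 : int) < 2).
lia.
Qed.

Lemma no_letter_run3 n v :
  ~ (letter n v = letter n (v + 1) /\ letter n (v + 1) = letter n (v + 2)).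
Proof.
have [w [->|->]] := int_parity v => -[eq01 eq12].
  by move: eq01; rewrite letter_odd; case: letter.
move: eq12; have -> : 2 * w + 1 + 1 = 2 * (w + 1) by ring.
have -> : 2 * w + 1 + 2 = 2 * (w + 1) + 1 by ring.
by rewrite letter_odd; case: letter.
Qed.

Lemma factor_atD m a b :
  factor_at m (a + b) = factor_at m a ++ factor_at (m + a%:Z) b.
Proof.
rewrite /factor_at mkseqD; congr (_ ++ _).
by apply: eq_in_mkseq => i _; rewrite PoszD addrA.
Qed.

Lemma factor_at_prefix m a L : (a <= L)%N -> prefix (factor_at m a) (factor_at m L).
Proof. by move=> le_aL; rewrite -(subnKC le_aL) factor_atD prefix_prefix. Qed.

Lemma factor_at_suffix m a L :
  (a <= L)%N -> suffix (factor_at (m + (L - a)%:Z) a) (factor_at m L).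
Proof. by move=> le_aL; rewrite -{2}(subnK le_aL) factor_atD suffix_suffix. Qed.

Lemma factor_at_infix m L s t u :
  factor_at m L = s ++ t ++ u -> factor_at (m + (size s)%:Z) (size t) = t.
Proof.
move=> eq_mL; have := congr1 size eq_mL; rewrite size_mkseq !size_cat => eqL.
move/eqP: eq_mL; rewrite eqL !factor_atD.
rewrite eqseq_cat ?size_mkseq // => /andP[_].
by rewrite eqseq_cat ?size_mkseq // => /andP[/eqP].
Qed.

Lemma factor_at_block n q : factor_at ((2 ^ n)%:Z * q) (2 ^ n) = block n (letter n q).
Proof.
by rewrite block_mkseq; apply: eq_in_mkseq => j lt_j; rewrite omega_pow2MD.
Qed.

Lemma letter_of_factor_at n P q b :
  P = (2 ^ n)%:Z * q -> factor_at P (2 ^ n) = block n b -> letter n q = b.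
Proof. by move=> ->; rewrite factor_at_block => /block_inj. Qed.

Lemma factor_at_blockS n P b :
  factor_at P (2 ^ n.+1) = block n.+1 b ->
  factor_at P (2 ^ n) = block n b /\
  factor_at (P + (2 ^ n)%:Z) (2 ^ n) = block n (~~ b).
Proof.
rewrite expnS mul2n -addnn factor_atD /= => /eqP.
by rewrite eqseq_cat ?size_mkseq ?size_block // => /andP[/eqP -> /eqP ->].
Qed.

Lemma factor_at_blocks n q k :
  factor_at ((2 ^ n)%:Z * q) (k * 2 ^ n) =
  flatten [seq block n b | b <- mkseq (fun t => letter n (q + t%:Z)) k].
Proof.
elim: k => [|k IH] //; rewrite mulSnr factor_atD IH mkseqS map_rcons flatten_rcons.
by rewrite -(factor_at_block n (q + k%:Z)) PoszM; congr (_ ++ factor_at _ _); ring.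
Qed.

Lemma block_pair_aligned n P b0 b1 :
  factor_at P (2 ^ n) = block n b0 ->
  factor_at (P + (2 ^ n)%:Z) (2 ^ n) = block n b1 ->
  exists q, P = (2 ^ n)%:Z * q.
Proof.
elim: n P b0 b1 => [|n IH] P b0 b1 blk0 blk1; first by exists P; rewrite mul1r.
have [blk00 blk01] := factor_at_blockS blk0.
have [blk10 blk11] := factor_at_blockS blk1.
have [p P_eq] := IH _ _ _ blk00 blk01.
have l0 : letter n p = b0 := letter_of_factor_at P_eq blk00.
have l1 : letter n (p + 1) = ~~ b0.
  by apply: letter_of_factor_at blk01; rewrite P_eq; ring.
have l2 : letter n (p + 2) = b1.
  by apply: letter_of_factor_at blk10; rewrite P_eq expnS PoszM; ring.
have l3 : letter n (p + 3) = ~~ b1.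
  by apply: letter_of_factor_at blk11; rewrite P_eq expnS PoszM; ring.
have [w [p_even | p_odd]] := int_parity p.
  by exists w; rewrite P_eq p_even expnS PoszM; ring.
have e0 : letter n (2 * w) = ~~ b0 by rewrite -l0 p_odd letter_odd negbK.
have e1 : letter n (2 * (w + 1)) = ~~ b0 by rewrite -l1 p_odd; congr letter; ring.
have b10 : b1 = b0.
  by rewrite -l2 -[b0]negbK -e1 -letter_odd p_odd; congr letter; ring.
have e2 : letter n (2 * (w + 2)) = ~~ b0.
  by rewrite -b10 -l3 p_odd; congr letter; ring.
exfalso; apply: (@no_letter_run3 n.+1 w).
by rewrite !letterS e0 e1 e2.
Qed.

Definition block_offset (m : int) (n : nat) : nat := `|((- m) %% (2 ^ n)%:Z)%Z|%N.

Lemma block_offsetE m n : (block_offset m n)%:Z = ((- m) %% (2 ^ n)%:Z)%Z.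
Proof. by rewrite /block_offset gez0_abs // modz_ge0 // eqz_nat -lt0n expn_gt0. Qed.

Lemma block_offset_lt m n : (block_offset m n < 2 ^ n)%N.
Proof. by rewrite -ltz_nat block_offsetE ltz_pmod // ltz_nat expn_gt0. Qed.

Lemma block_offset_aligned m n : exists q, m + (block_offset m n)%:Z = (2 ^ n)%:Z * q.
Proof. by exists (- ((- m) %/ (2 ^ n)%:Z)%Z); rewrite block_offsetE /modz; ring. Qed.

Lemma block_offset_unique m n a q :
  (a < 2 ^ n)%N -> m + a%:Z = (2 ^ n)%:Z * q -> a = block_offset m n.
Proof.
move=> lt_a aligned; apply/eqP; rewrite -eqz_nat block_offsetE.
have -> : - m = (- q) * (2 ^ n)%:Z + a%:Z by lia.
by rewrite modzMDl modz_small // lez_nat ltz_nat lt_a.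
Qed.

Lemma block_offsetS m n : (block_offset m n.+1 <= block_offset m n + 2 ^ n)%N.
Proof.
have [q aligned] := block_offset_aligned m n.+1.
have lt_r := block_offset_lt m n.+1.
move: aligned lt_r; set r := block_offset m n.+1; rewrite expnS => aligned lt_r.
have N_gt0 : (0 < 2 ^ n)%N by rewrite expn_gt0.
have -> : block_offset m n = (r %% 2 ^ n)%N.
  apply/esym/(@block_offset_unique _ _ _ (2 * q - (r %/ 2 ^ n)%N%:Z)).
    exact: ltn_pmod.
  move: aligned; rewrite {1}(divn_eq r (2 ^ n)) PoszD !PoszM => aligned.
  by rewrite mulrBr; lia.
have := divn_eq r (2 ^ n); have : (r %/ 2 ^ n < 2)%N by rewrite ltn_divLR.
by case: (r %/ 2 ^ n)%N => [|[|]] // _; lia.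
Qed.

Lemma block_decomp_offset n m alpha g0 ks g1 :
  alpha = factor_at m (size alpha) -> block_decomp n alpha g0 ks g1 ->
  size g0 = block_offset m n.
Proof.
move=> alpha_eq [decomp size_ks _ _ /andP[lt_g0 _]].
case: ks decomp size_ks => [|b0 [|b1 ks]] //= decomp _.
have alpha_cat : factor_at m (size alpha) =
    g0 ++ block n b0 ++ block n b1 ++ (flatten [seq block n b | b <- ks] ++ g1).
  by rewrite -alpha_eq decomp -!catA.
have blk0 := factor_at_infix alpha_cat.
have blk1 := factor_at_infix (etrans alpha_cat (catA _ _ _)).
rewrite size_block in blk0; rewrite size_cat !size_block PoszD addrA in blk1.
have [q aligned] := block_pair_aligned blk0 blk1.
exact: block_offset_unique lt_g0 aligned.
Qed.

Lemma block_decomp_unique n m alpha g0 ks g1 g0' ks' g1' :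
  alpha = factor_at m (size alpha) ->
  block_decomp n alpha g0 ks g1 -> block_decomp n alpha g0' ks' g1' ->
  [/\ g0 = g0', ks = ks' & g1 = g1'].
Proof.
move=> alpha_eq dec dec'.
have size_g0 : size g0 = size g0'.
  by rewrite (block_decomp_offset alpha_eq dec) (block_decomp_offset alpha_eq dec').
case: dec dec' => [-> _ _ _ /andP[_ lt_g1]] [/eqP + _ _ _ /andP[_ lt_g1']].
rewrite eqseq_cat // => /andP[/eqP <- /eqP eq_rest].
have size_ks : size ks = size ks'.
  move: (congr1 size eq_rest); rewrite !size_cat !size_flatten_blocks.
  move/(congr1 (divn^~ (2 ^ n)%N)).
  by rewrite !divnMDl ?expn_gt0 // !divn_small // !addn0.
move/eqP: eq_rest; rewrite eqseq_cat ?size_flatten_blocks ?size_ks //.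
by case/andP=> /eqP/flatten_blocks_inj -> /eqP ->.
Qed.

Lemma block_decomp_exists m alpha :
  alpha = factor_at m (size alpha) -> (2 <= size alpha)%N ->
  exists n g0 ks g1, block_decomp n alpha g0 ks g1.
Proof.
move=> alpha_eq; set L := size alpha => L_ge2.
pose fits n := (block_offset m n + 2 * 2 ^ n <= L)%N.
have fits0 : exists n, fits n.
  by exists 0%N; have := block_offset_lt m 0; rewrite /fits expn0; lia.
have fits_le n : fits n -> (n <= L)%N.
  by rewrite /fits => fit_n; have := ltn_expl n (isT : (1 < 2)%N); lia.
(* The largest scale at which two whole blocks fit; by maximality at most four do. *)
have [n fit_n fits_max] := ex_maxnP fits0 fits_le.
move: fit_n; rewrite /fits; set r := block_offset m n => fit_n.
have [q aligned] := block_offset_aligned m n.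
have lt_r : (r < 2 ^ n)%N := block_offset_lt m n.
have N_gt0 : (0 < 2 ^ n)%N by rewrite expn_gt0.
set k := ((L - r) %/ 2 ^ n)%N; set s := ((L - r) %% 2 ^ n)%N.
have lt_s : (s < 2 ^ n)%N by rewrite ltn_pmod.
have L_eq : L = (r + (k * 2 ^ n + s))%N by rewrite -divn_eq; lia.
have k_ge2 : (2 <= k)%N by rewrite leq_divRL //; lia.
have k_le4 : (k <= 4)%N.
  rewrite leqNgt; apply/negP; rewrite leq_divRL // => five_blocks.
  have : (n.+1 <= n)%N.
    by apply: fits_max; rewrite /fits expnS; have := block_offsetS m n; lia.
  by rewrite ltnn.
exists n, (factor_at m r), (mkseq (fun t => letter n (q + t%:Z)) k),
  (factor_at ((2 ^ n)%:Z * q + (k * 2 ^ n)%N%:Z) s).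
split.
- by rewrite alpha_eq -/L L_eq !factor_atD aligned factor_at_blocks.
- by rewrite size_mkseq k_ge2 k_le4.
- exists (letter n (q - 1)); rewrite -factor_at_block.
  have -> : m = (2 ^ n)%:Z * (q - 1) + (2 ^ n - r)%N%:Z by lia.
  exact: factor_at_suffix (ltnW lt_r).
- exists (letter n (q + k%:Z)); rewrite -factor_at_block.
  have -> : (2 ^ n)%:Z * q + (k * 2 ^ n)%N%:Z = (2 ^ n)%:Z * (q + k%:Z).
    by rewrite PoszM; ring.
  exact: factor_at_prefix (ltnW lt_s).
- by rewrite !size_mkseq lt_r lt_s.
Qed.
End Omega.

Unset Implicit Arguments.
Theorem proposition3p5 (alpha : seq bool) :
  occurs alpha -> 2 <= size alpha ->
  (exists (n : nat) (g0 ks g1 : seq bool), block_decomp n alpha g0 ks g1) /\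
  (forall (n : nat) (g0 ks g1 g0' ks' g1' : seq bool),
      block_decomp n alpha g0 ks g1 -> block_decomp n alpha g0' ks' g1' ->
      [/\ g0 = g0', ks = ks' & g1 = g1']).
Proof.
move=> [_ [m alpha_eq]] size_ge2; split; first exact: block_decomp_exists alpha_eq size_ge2.
by move=> n g0 ks g1 g0' ks' g1'; apply: block_decomp_unique alpha_eq.
Qed.
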